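(* Let $d\ge2$, $k\in\overline{\mathbb{N}}_\ast^d$ and $\sigma$ a skew-bicharacter of $\mathbb{Z}^d_k$. Let $N,M\in\mathbb{N}_\ast$ with $N+M<\wedge k$, and let $\omega_{N,M}$ be the diagonal operator on $\ell^2(\mathbb{Z}^d)$ with $\omega_{N,M}e_n=w_{N,M}(n)e_n$ for all $n\in\mathbb{Z}^d$. Then $\omega_{N,M}$ is a finite rank operator and, for all $m\in I_k$, \[ \big\|[\omega_{N,M},\pi_{k,\sigma}(\delta_{q_k(m)})]\big\|\le \frac{|m|}{M}, \] the norm being the operator norm on $\ell^2(\mathbb{Z}^d)$.
   Context: $\mathbb{N}_\ast=\{2,3,\ldots\}$, $\overline{\mathbb{N}}_\ast=\mathbb{N}_\ast\cup\{\infty\}$. For $k\in\overline{\mathbb{N}}_\ast^d$: $k\mathbb{Z}^d=\prod_jk_j\mathbb{Z}$ with $\infty\mathbb{Z}=\{0\}$, $\mathbb{Z}^d_k=\mathbb{Z}^d/k\mathbb{Z}^d$, $q_k$ the canonical surjection. A skew-bicharacter of $\mathbb{Z}^d_k$ is a bicharacter $\sigma$ into the unit circle with $\sigma(n,m)=\overline{\sigma(m,n)}$, identified with its lift to $\mathbb{Z}^d$. On $\ell^2(\mathbb{Z}^d_k)$ (basis $e_m$) let $U^n_{k,\sigma}e_m=\sigma(m,n)e_{m-n}$ and $\rho_{k,\sigma}(f)=\sum_nf(n)U^n_{k,\sigma}$ for $f\in\ell^1(\mathbb{Z}^d_k)$; $C^\ast(\mathbb{Z}^d_k,\sigma)$ is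 the norm closure of the image. $\delta_p\in\ell^1(\mathbb{Z}^d_k)$ is the indicator of $\{p\}$. $I_k=\prod_{j=1}^d\{\lfloor\frac{1-k_j}{2}\rfloor,\ldots,\lfloor\frac{k_j-1}{2}\rfloor\}$ (the $j$-th factor is $\mathbb{Z}$ if $k_j=\infty$); $q_k$ restricts to a bijection $I_k\to\mathbb{Z}^d_k$ and $\{I_k+n:n\in k\mathbb{Z}^d\}$ partitions $\mathbb{Z}^d$. The representation $\pi_{k,\sigma}$ of $C^\ast(\mathbb{Z}^d_k,\sigma)$ on $\ell^2(\mathbb{Z}^d)$ (canonical basis $(e_n)_{n\in\mathbb{Z}^d}$) is defined blockwise: for each $n\in k\mathbb{Z}^d$, $\pi_{k,\sigma}(a)$ leaves $H_n=\overline{\mathrm{span}}\{e_j:j\in I_k+n\}$ invariant and acts on it as $W_n\rho_{k,\sigma}(a)W_n^\ast$, where $W_n:\ell^2(\mathbb{Z}^d_k)\to H_n$ is the unitary with $W_ne_{q_k(j)}=e_{j+n}$ for $j\in I_k$. It is a faithful unital *-representation. For $n\in\mathbb{Z}^d$, $|n|=\sum_j|n_j|$; $\wedge k=\min\{|n|:n\in\mathbb{Z}^d\setminus I_k\}\in\overline{\mathbb{N}}_\ast$ ($=\infty$ if $k=\infty^d$). For $N,M\in\mathbb{N}_\ast$, $w_{N,M}(n)=1$ if $|n|\le N$, $=\frac{M+N-|n|}{M}$ if $N\le|n|\le M+N$, and $0$ otherwise. *)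

From mathcomp Require Import all_boot all_order all_algebra.
From mathcomp Require Import complex.
From mathcomp Require Import classical_sets reals constructive_ereal ereal esum.

Set Implicit Arguments.
Unset Strict Implicit.
Unset Printing Implicit Defensive.

Import Order.TTheory GRing.Theory Num.Theory.
Local Open Scope ring_scope.
Local Open Scope complex_scope.

Notation Zd d := ('rV[int]_d).

(* An extended index k in Nbar_*^d : [None] stands for infinity. *)
Definition kvalid (d : nat) (k : 'I_d -> option nat) : Prop :=
  forall j, match k j with Some kj => (2 <= kj)%N | None => true end.

(* lower and upper ends of the j-th factor of I_k :
   floor((1-kj)/2) and floor((kj-1)/2) (divz floors for a positive divisor) *)
Definition klo (kj : nat) : int := ((1 - kj%:Z) %/ 2)%Z.
Definition khi (kj : nat) : int := ((kj%:Z - 1) %/ 2)%Z.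

Definition inIk (d : nat) (k : 'I_d -> option nat) (n : Zd d) : bool :=
  [forall j, match k j with
             | Some kj => (klo kj <= n ord0 j) && (n ord0 j <= khi kj)
             | None => true end].

Definition inkZ (d : nat) (k : 'I_d -> option nat) (n : Zd d) : bool :=
  [forall j, match k j with
             | Some kj => (kj%:Z %| n ord0 j)%Z
             | None => n ord0 j == 0 end].

(* rep k n : the unique element of I_k congruent to n modulo k Z^d, i.e. the
   element of I_k corresponding to q_k(n) under the bijection I_k -> Z^d_k. *)
Definition rep (d : nat) (k : 'I_d -> option nat) (n : Zd d) : Zd d :=
  \row_j match k j with
         | Some kj => klo kj + ((n ord0 j - klo kj) %% kj%:Z)%Z
         | None => n ord0 j end.

Definition l1 (d : nat) (n : Zd d) : nat := (\sum_(j < d) `|n ord0 j|%N)%N.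

(* "L < wedge k", where wedge k = min{ |n| : n \notin I_k } (= infinity if the
   set is empty, i.e. k = infinity^d): every n outside I_k has |n| > L. *)
Definition lt_wedge (d : nat) (k : 'I_d -> option nat) (L : nat) : Prop :=
  forall n : Zd d, ~~ inIk k n -> (L < l1 n)%N.

(* sigma, lifted to Z^d, is a skew-bicharacter of Z^d_k :
   unimodular, bi-multiplicative, skew, and factoring through the quotient
   Z^d -> Z^d_k (in the first variable; the second follows by skewness). *)
Definition skew_bichar (R : rcfType) (d : nat) (k : 'I_d -> option nat)
    (sigma : Zd d -> Zd d -> R[i]) : Prop :=
  [/\ (forall n m, `|sigma n m| = 1),
      (forall n n' m, sigma (n + n') m = sigma n m * sigma n' m),
      (forall n m m', sigma n (m + m') = sigma n m * sigma n m'),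
      (forall n m, sigma n m = (sigma m n)^*) &
      (forall a n m, inkZ k a -> sigma (n + a) m = sigma n m)].

Definition modsq (R : rcfType) (z : R[i]) : R := complex.Re z ^+ 2 + complex.Im z ^+ 2.

Definition l2sq (R : realType) (d : nat) (x : Zd d -> R[i]) : \bar R :=
  \esum_(n in [set: Zd d]) (modsq (x n))%:E.

Definition inl2 (R : realType) (d : nat) (x : Zd d -> R[i]) : Prop :=
  (l2sq x < +oo)%E.

Definition opnorm_le (R : realType) (d : nat)
    (T : (Zd d -> R[i]) -> (Zd d -> R[i])) (c : R) : Prop :=
  0 <= c /\ forall x, inl2 x -> (l2sq (T x) <= (c ^+ 2)%:E * l2sq x)%E.

Definition finite_rank (R : realType) (d : nat)
    (T : (Zd d -> R[i]) -> (Zd d -> R[i])) : Prop :=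
  (exists c : R, opnorm_le T c) /\
  exists (r : nat) (v : 'I_r -> Zd d -> R[i]),
    (forall i, inl2 (v i)) /\
    forall x, inl2 x -> exists a : 'I_r -> R[i],
        T x = fun n => \sum_(i < r) a i * v i n.

Definition w (R : realType) (N M : nat) (d : nat) (n : Zd d) : R :=
  if (l1 n <= N)%N then 1
  else if (l1 n <= M + N)%N then ((M + N - l1 n)%N)%:R / M%:R
  else 0.

Definition omega (R : realType) (N M : nat) (d : nat) (x : Zd d -> R[i]) :
  Zd d -> R[i] := fun n => (w R N M n)%:C * x n.

(* Elements of l^2(Z^d_k) are modelled as k Z^d-periodic functions on Z^d
   (functions on Z^d_k composed with q_k); e_{q_k(m)} is the indicator of the
   class of m.  rho_{k,sigma}(delta_{q_k(p)}) = U^p, with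
   U^p e_m = sigma(m,p) e_{m-p}, i.e. (U^p g)(m) = sigma(m+p,p) g(m+p). *)
Definition Uop (R : rcfType) (d : nat) (sigma : Zd d -> Zd d -> R[i]) (p : Zd d)
    (g : Zd d -> R[i]) : Zd d -> R[i] :=
  fun m => sigma (m + p) p * g (m + p).

(* W_n : l^2(Z^d_k) -> H_n, W_n e_{q_k(j)} = e_{j+n} (j \in I_k) *)
Definition Wop (R : rcfType) (d : nat) (k : 'I_d -> option nat) (n : Zd d)
    (g : Zd d -> R[i]) : Zd d -> R[i] :=
  fun j => if inIk k (j - n) then g (j - n) else 0.

Definition Wadj (R : rcfType) (d : nat) (k : 'I_d -> option nat) (n : Zd d)
    (x : Zd d -> R[i]) : Zd d -> R[i] :=
  fun m => x (rep k m + n).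

(* pi_{k,sigma}(delta_{q_k(p)}) on l^2(Z^d), defined blockwise: on the block
   H_n (n \in k Z^d) containing e_j, namely n = j - rep k j, it acts as
   W_n rho_{k,sigma}(delta_{q_k(p)}) W_n^*. *)
Definition pi_delta (R : rcfType) (d : nat) (k : 'I_d -> option nat)
    (sigma : Zd d -> Zd d -> R[i]) (p : Zd d) (x : Zd d -> R[i]) : Zd d -> R[i] :=
  fun j => let n := j - rep k j in Wop k n (Uop sigma p (Wadj k n x)) j.

Definition commutator (R : rcfType) (d : nat) (S T : (Zd d -> R[i]) -> (Zd d -> R[i]))
    (x : Zd d -> R[i]) : Zd d -> R[i] :=
  fun n => S (T x) n - T (S x) n.

(* On each block H_n the operator [pi_delta k sigma m] moves coordinates by a
   bijection [shift_in_block k m] of Z^d, with unimodular coefficients, so its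
   commutator with the diagonal [omega] is that same weighted permutation times
   the multiplier [w j - w (shift_in_block k m j)]; hence its norm is at most the
   supremum of these differences.  Inside a block the shift is translation by [m],
   and [w] is [1/M]-Lipschitz for the l^1 norm.  When the translate leaves I_k,
   the hypothesis N + M < wedge k forces [w] to vanish at a point at distance
   [l1 m] from each of the two indices, so both weights are at most [l1 m / M].
   Finite rank holds since [w] is supported in the l^1 ball of radius N + M. *)

From mathcomp Require Import all_boot all_order all_algebra.
From mathcomp Require Import complex.
From mathcomp Require Import classical_sets reals constructive_ereal ereal esum.
From mathcomp Require Import fsbigop.
From mathcomp Require Import zify ring lra.

Set Implicit Arguments.
Unset Strict Implicit.
Unset Printing Implicit Defensive.

Import Order.TTheory GRing.Theory Num.Theory.
Local Open Scope ring_scope.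

Lemma khi_klo (kj : nat) : khi kj = klo kj + kj%:Z - 1.
Proof.
rewrite /khi /klo.
have := divz_eq (1 - kj%:Z) 2; have := divz_eq (kj%:Z - 1) 2.
have := modz_ge0 (1 - kj%:Z) (isT : (2 : int) != 0).
have := modz_ge0 (kj%:Z - 1) (isT : (2 : int) != 0).
have := ltz_pmod (1 - kj%:Z) (isT : (0 < 2 :> int)).
have := ltz_pmod (kj%:Z - 1) (isT : (0 < 2 :> int)).
lia.
Qed.

Definition repz (kj : nat) (x : int) : int := klo kj + ((x - klo kj) %% kj%:Z)%Z.

Section RepresentativeInt.
Variable kj : nat.

Lemma repz_in (x : int) : (2 <= kj)%N -> (klo kj <= repz kj x) && (repz kj x <= khi kj).
Proof.
move=> kj2; rewrite /repz khi_klo.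
have := modz_ge0 (x - klo kj) (_ : kj%:Z != 0).
have := ltz_pmod (x - klo kj) (_ : 0 < kj%:Z).
lia.
Qed.

Lemma repz_id (x : int) : (2 <= kj)%N -> (klo kj <= x) && (x <= khi kj) -> repz kj x = x.
Proof. by move=> kj2; rewrite /repz khi_klo => /andP[? ?]; rewrite modz_small; lia. Qed.

Lemma repzD (x a : int) : (kj%:Z %| a)%Z -> repz kj (x + a) = repz kj x.
Proof.
move=> /dvdzP[q ->]; rewrite /repz.
by rewrite (_ : x + q * kj%:Z - klo kj = q * kj%:Z + (x - klo kj)) ?modzMDl //; ring.
Qed.

Lemma dvdz_subr_repz (x : int) : (kj%:Z %| x - repz kj x)%Z.
Proof.
apply/dvdzP; exists ((x - klo kj) %/ kj%:Z)%Z; rewrite /repz.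
have -> : x - (klo kj + ((x - klo kj) %% kj%:Z)%Z) = x - klo kj - ((x - klo kj) %% kj%:Z)%Z.
  by ring.
by rewrite {1}(divz_eq (x - klo kj) kj%:Z) addrK.
Qed.

End RepresentativeInt.

Section Representative.
Variables (d : nat) (k : 'I_d -> option nat).
Implicit Types n a b : Zd d.

Lemma inkZB a b : inkZ k a -> inkZ k b -> inkZ k (a - b).
Proof.
move=> /forallP ha /forallP hb; apply/forallP => j; rewrite !mxE.
move: (ha j) (hb j); case: (k j) => [kj|] ha' hb'; first exact: rpredB.
by rewrite (eqP ha') (eqP hb') subrr.
Qed.

Lemma rep_shift n a : inkZ k a -> rep k (n + a) = rep k n.
Proof.
move=> /forallP ha; apply/rowP => j; rewrite !mxE [ord0]ord1; move: (ha j).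
by case: (k j) => [kj|] h; [exact: repzD | rewrite (eqP h) addr0].
Qed.

Lemma inkZ_subr_rep n : inkZ k (n - rep k n).
Proof.
apply/forallP => j; rewrite !mxE.
by case: (k j) => [kj|]; [exact: dvdz_subr_repz | rewrite subrr].
Qed.

Hypothesis kP : kvalid k.

Lemma rep_in n : inIk k (rep k n).
Proof.
apply/forallP => j; rewrite mxE; move: (kP j).
by case: (k j) => [kj|] //; exact: repz_in.
Qed.

Lemma rep_id n : inIk k n -> rep k n = n.
Proof.
move=> /forallP hn; apply/rowP => j; rewrite mxE [ord0]ord1; move: (kP j) (hn j).
by case: (k j) => [kj|] //; exact: repz_id.
Qed.

Lemma inIk_inkZ_eq a b : inIk k a -> inIk k b -> inkZ k (a - b) -> a = b.
Proof.
move=> ha hb /(rep_shift b); rewrite addrC subrK => e.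
by rewrite -(rep_id ha) -(rep_id hb).
Qed.

End Representative.

Ltac rowring := apply/rowP => ?; rewrite !mxE; ring.

(* On the block [H_n] containing [e_j], [n = j - rep k j], the operator
   [pi_delta k sigma p] reads coordinate [shift_in_block k p j] into coordinate [j]. *)
Definition shift_in_block (d : nat) (k : 'I_d -> option nat) (p j : Zd d) : Zd d :=
  rep k (rep k j + p) + (j - rep k j).

Section ShiftInBlock.
Variables (d : nat) (k : 'I_d -> option nat) (p : Zd d).
Hypothesis kP : kvalid k.
Local Notation f := (shift_in_block k p).

Lemma rep_shift_in_block j : rep k (f j) = rep k (rep k j + p).
Proof. by rewrite /shift_in_block rep_shift ?inkZ_subr_rep // (rep_id kP) ?rep_in. Qed.

Lemma shift_in_block_offset j : f j - rep k (f j) = j - rep k j.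
Proof. by rewrite rep_shift_in_block /shift_in_block addrC addKr. Qed.

Lemma shift_in_block_inj : injective f.
Proof.
move=> a b fab.
have block : a - rep k a = b - rep k b.
  by rewrite -shift_in_block_offset fab shift_in_block_offset.
have offset : rep k a = rep k b.
  apply: (inIk_inkZ_eq kP); rewrite ?rep_in //.
  have := inkZB (inkZ_subr_rep k (rep k a + p)) (inkZ_subr_rep k (rep k b + p)).
  rewrite -!rep_shift_in_block fab.
  by congr inkZ; rowring.
by rewrite -(subrK (rep k a) a) block offset subrK.
Qed.

Lemma shift_in_block_cases j :
  f j = j + p \/
  (~~ inIk k j || ~~ inIk k (j + p)) && (~~ inIk k (f j) || ~~ inIk k (f j - p)).
Proof.
have [/andP[hj hjp]|hjp] := boolP (inIk k j && inIk k (j + p)).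
  by left; rewrite /shift_in_block !rep_id // subrr addr0.
have [/andP[hf hfp]|hfp] := boolP (inIk k (f j) && inIk k (f j - p)); last first.
  by right; rewrite -!negb_and hjp hfp.
left; have e : f j - p = rep k j.
  apply: (inIk_inkZ_eq kP); rewrite ?rep_in //.
  have := inkZB (inkZ_subr_rep k j) (inkZ_subr_rep k (rep k j + p)).
  by congr inkZ; rewrite /shift_in_block; rowring.
have := shift_in_block_offset j; rewrite (rep_id kP hf) subrr => /eqP.
by rewrite eq_sym subr_eq0 => /eqP hj; rewrite [in RHS]hj -e subrK.
Qed.

End ShiftInBlock.

Section L1.
Variable d : nat.
Implicit Types a b : Zd d.

Lemma l1N a : l1 (- a) = l1 a.
Proof. by apply: eq_bigr => j _; rewrite !mxE abszN. Qed.

Lemma l1_le_subr a b : (l1 a <= l1 b + l1 (a - b))%N.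
Proof.
rewrite /l1 -big_split /=; apply: leq_sum => j _; rewrite !mxE.
by move: (a ord0 j) (b ord0 j) => x y; lia.
Qed.

End L1.

Section Weight.
Variables (R : realType) (N M d : nat).
Hypothesis M_gt0 : (0 < M)%N.
Implicit Types a b n : Zd d.

Definition wnum (L : nat) : nat :=
  if (L <= N)%N then M else if (L <= M + N)%N then (M + N - L)%N else 0%N.

Lemma wE n : w R N M n = (wnum (l1 n))%:R / M%:R.
Proof.
rewrite /w /wnum; case: ifP => _; first by rewrite divff // pnatr_eq0 -lt0n.
by case: ifP => _ //; rewrite mul0r.
Qed.

Lemma wnum_lipschitz La Lb D : (Lb <= La + D)%N -> (wnum La <= wnum Lb + D)%N.
Proof.
by rewrite /wnum; case: (leqP La N); case: (leqP La (M + N));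
  case: (leqP Lb N); case: (leqP Lb (M + N)); lia.
Qed.

Lemma w_lipschitz a b : w R N M a <= w R N M b + (l1 (a - b))%:R / M%:R.
Proof.
rewrite !wE -mulrDl ler_wpM2r ?invr_ge0 ?ler0n // -natrD ler_nat.
by apply: wnum_lipschitz; rewrite -(l1N (a - b)) opprB l1_le_subr.
Qed.

Lemma w_ge0 n : 0 <= w R N M n.
Proof. by rewrite wE divr_ge0 ?ler0n. Qed.

Lemma w_le1 n : w R N M n <= 1.
Proof. by rewrite wE ler_pdivrMr ?ltr0n // mul1r ler_nat /wnum; do 2?case: ifP; lia. Qed.

Lemma l1_le_of_w_neq0 n : w R N M n != 0 -> (l1 n <= N + M)%N.
Proof.
by rewrite /w; case: leqP => ?; [lia | case: leqP => ?; rewrite ?eqxx //; lia].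
Qed.

Variable k : 'I_d -> option nat.
Hypothesis wedge : lt_wedge k (N + M).

Lemma w_notin n : ~~ inIk k n -> w R N M n = 0.
Proof.
move=> /wedge; apply: contraTeq => /l1_le_of_w_neq0.
by rewrite leqNgt => /negbTE->.
Qed.

Lemma w_le_of_shift_notin q a :
  ~~ inIk k a || ~~ inIk k (a + q) -> w R N M a <= (l1 q)%:R / M%:R.
Proof.
case/orP => [/w_notin-> |/w_notin wq0]; first by rewrite divr_ge0 ?ler0n.
by have := w_lipschitz a (a + q); rewrite wq0 add0r opprD addNKr l1N.
Qed.

Hypothesis kP : kvalid k.

Lemma w_shift_in_block_dist p j :
  `|w R N M j - w R N M (shift_in_block k p j)| <= (l1 p)%:R / M%:R.
Proof.
rewrite ler_norml; have [->|/andP[hj hf]] := shift_in_block_cases p kP j.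
  have := w_lipschitz j (j + p); have := w_lipschitz (j + p) j.
  rewrite opprD addNKr l1N addrAC subrr add0r => ? ?.
  by apply/andP; split; lra.
have := w_le_of_shift_notin hj; have := w_ge0 j.
have := w_le_of_shift_notin (q := - p) hf; have := w_ge0 (shift_in_block k p j).
rewrite l1N => ? ? ? ?; apply/andP; split; lra.
Qed.

End Weight.

Local Open Scope complex_scope.

Section SquaredModulus.
Variable R : rcfType.
Implicit Types a b : R[i].

Lemma modsqM a b : modsq (a * b) = modsq a * modsq b.
Proof. by case: a => a1 a2; case: b => b1 b2; rewrite /modsq /=; ring. Qed.

Lemma modsq_ge0 a : 0 <= modsq a.
Proof. by rewrite /modsq addr_ge0 ?sqr_ge0. Qed.

Lemma modsq_real (r : R) : modsq r%:C = r ^+ 2.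
Proof. by rewrite /modsq /= expr0n /= addr0. Qed.

Lemma modsq_norm1 a : `|a| = 1 -> modsq a = 1.
Proof. by move=> a1; apply: (@complexI R); rewrite /modsq add_Re2_Im2 a1 expr1n. Qed.

End SquaredModulus.

Section ExtendedSums.
Variables (R : realType) (T : choiceType).

Lemma esum_scale_le (c : R) (g : T -> R) : 0 <= c -> (forall i, 0 <= g i) ->
  (\esum_(i in [set: T]) (c * g i)%:E <= c%:E * \esum_(i in [set: T]) (g i)%:E)%E.
Proof.
move=> c0 g0; apply: ge_ereal_sup => _ [X [finX _] <-].
rewrite fsbig_finite // (eq_bigr (fun i => c%:E * (g i)%:E)%E); last by move=> ? _.
rewrite -ge0_sume_distrr; last by move=> i _; rewrite lee_fin.
apply: lee_wpmul2l; first by rewrite lee_fin.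
by apply: ereal_sup_ubound; exists X => //; rewrite fsbig_finite.
Qed.

Lemma esum_comp_inj_le (f : T -> T) (g : T -> \bar R) :
  injective f -> (forall i, (0 <= g i)%E) ->
  (\esum_(i in [set: T]) g (f i) <= \esum_(i in [set: T]) g i)%E.
Proof.
move=> f_inj g0; rewrite -(esum_image setT f g); last by move=> a b _ _ /f_inj.
by rewrite esum_mkcond; apply: le_esum => i _; case: ifP.
Qed.

End ExtendedSums.

Lemma pi_deltaE (R : rcfType) d (k : 'I_d -> option nat) (sigma : Zd d -> Zd d -> R[i])
    (p : Zd d) x j : kvalid k ->
  pi_delta k sigma p x j = sigma (rep k j + p) p * x (shift_in_block k p j).
Proof.
by move=> kP; rewrite /pi_delta /Wop /Uop /Wadj /= opprB addrC subrK rep_in.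
Qed.

Section Commutator.
Variables (R : realType) (N M d : nat) (k : 'I_d -> option nat).
Variable sigma : Zd d -> Zd d -> R[i].
Hypotheses (M_gt0 : (0 < M)%N) (kP : kvalid k) (wedge : lt_wedge k (N + M)).
Hypothesis sigma_norm1 : forall n m, `|sigma n m| = 1.

Lemma modsq_commutator_omega_pi p x j :
  modsq (commutator (@omega R N M d) (pi_delta k sigma p) x j) =
  (w R N M j - w R N M (shift_in_block k p j)) ^+ 2 *
    modsq (x (shift_in_block k p j)).
Proof.
rewrite /commutator /omega !pi_deltaE //.
have := sigma_norm1 (rep k j + p) p.
move: (sigma _ _) (x (shift_in_block k p j)) (w R N M j) (w R N M (shift_in_block k p j)).
move=> s y a b s1.
have -> : a%:C * (s * y) - s * (b%:C * y) = s * ((a - b)%:C * y) by rewrite rmorphB /=; ring.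
by rewrite !modsqM modsq_real modsq_norm1 ?mul1r.
Qed.

Lemma opnorm_le_commutator_omega_pi p :
  opnorm_le (commutator (@omega R N M d) (pi_delta k sigma p)) ((l1 p)%:R / M%:R).
Proof.
set c := (l1 p)%:R / M%:R; have c0 : 0 <= c by rewrite divr_ge0 ?ler0n.
split => // x _; rewrite /l2sq.
apply: (@le_trans _ _ (\esum_(n in [set: Zd d]) (c ^+ 2 * modsq (x (shift_in_block k p n)))%:E))%E.
  apply: le_esum => n _; rewrite lee_fin modsq_commutator_omega_pi.
  rewrite ler_wpM2r ?modsq_ge0 // -real_normK ?num_real // lerXn2r ?nnegrE //.
  exact: w_shift_in_block_dist.
apply: (@le_trans _ _ (\esum_(n in [set: Zd d]) (c ^+ 2 * modsq (x n))%:E))%E.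
  apply: (esum_comp_inj_le (g := fun n => (c ^+ 2 * modsq (x n))%:E)).
    exact: shift_in_block_inj.
  by move=> n; rewrite lee_fin mulr_ge0 ?sqr_ge0 ?modsq_ge0.
by apply: esum_scale_le; [exact: sqr_ge0 | move=> ?; exact: modsq_ge0].
Qed.

End Commutator.

Section Box.
Variables (d L : nat).

Definition box_pt (u : {ffun 'I_d -> 'I_(2 * L).+1}) : Zd d :=
  \row_j ((u j : nat)%:Z - L%:Z).

Lemma box_pt_inj : injective box_pt.
Proof.
move=> u v /rowP e; apply/ffunP => j; apply/val_inj.
by have := e j; rewrite !mxE /=; move: (nat_of_ord (u j)) (nat_of_ord (v j)); lia.
Qed.

Lemma exists_box_pt (n : Zd d) : (l1 n <= L)%N -> exists u, box_pt u = n.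
Proof.
move=> nL; have nj j : (`|n ord0 j| <= L)%N.
  by apply: leq_trans nL; rewrite /l1 (bigD1 j) //= leq_addr.
exists [ffun j => inord (absz (n ord0 j + L%:Z))]; apply/rowP => j.
by rewrite !mxE ffunE inordK; have := nj j; move: (n ord0 j); lia.
Qed.

End Box.

Lemma inl2_indicator (R : realType) d (a : Zd d) :
  inl2 (fun n : Zd d => if n == a then (1 : R[i]) else 0).
Proof.
rewrite /inl2 /l2sq (eq_esum (b := fun n => if n \in [set a]%classic then 1%:E else 0%E)).
  by rewrite -esum_mkcond esum_set1 //= ltry.
move=> n _; have [->|na] := eqVneq n a.
  by rewrite mem_set // /modsq /= expr1n expr0n addr0.
by rewrite memNset ?/modsq /= ?expr0n ?addr0 // => /= na'; rewrite na' eqxx in na.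
Qed.

Section Diagonal.
Variables (R : realType) (d : nat) (v : Zd d -> R).
Hypothesis v01 : forall n, 0 <= v n <= 1.

Let diag (x : Zd d -> R[i]) : Zd d -> R[i] := fun n => (v n)%:C * x n.

Lemma opnorm_le_diag : opnorm_le diag 1.
Proof.
split=> // x _; rewrite expr1n mul1e; apply: le_esum => n _.
have /andP[v0 v1] := v01 n.
by rewrite lee_fin /diag modsqM modsq_real ler_piMl ?modsq_ge0 ?exprn_ile1.
Qed.

Lemma finite_rank_diag (L : nat) :
  (forall n, v n != 0 -> (l1 n <= L)%N) -> finite_rank diag.
Proof.
move=> supp; split; first by exists 1; exact: opnorm_le_diag.
pose T := {ffun 'I_d -> 'I_(2 * L).+1}.
pose pt := @box_pt d L.
pose e (n : Zd d) := fun m : Zd d => if m == n then (1 : R[i]) else 0.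
exists #|T|, (fun i => e (pt (enum_val i))); split=> [i|x _].
  exact: inl2_indicator.
exists (fun i => diag x (pt (enum_val i))); apply: boolp.funext => n /=.
have -> : \sum_(i < #|T|) diag x (pt (enum_val i)) * e (pt (enum_val i)) n =
          \sum_(u | pt u == n) diag x n.
  rewrite -(big_enum_val (A := T) (fun u => diag x (pt u) * e (pt u) n)).
  rewrite [RHS]big_mkcond; apply: eq_bigr => u _; rewrite /e eq_sym.
  by case: eqP => [->|_]; rewrite ?mulr1 ?mulr0.
have [vn0|/supp/exists_box_pt[u0 <-]] := eqVneq (v n) 0.
  by rewrite big1 // /diag vn0 (_ : 0%:C = 0) // mul0r.
by rewrite (big_pred1 u0) // => u; apply/eqP/eqP => [/box_pt_inj|->].
Qed.

End Diagonal.

Theorem mainTheorem2 (R : realType) (d : nat) (k : 'I_d -> option nat)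
    (sigma : Zd d -> Zd d -> R[i]) (N M : nat) :
  (2 <= d)%N -> kvalid k -> skew_bichar k sigma ->
  (2 <= N)%N -> (2 <= M)%N -> lt_wedge k (N + M) ->
  finite_rank (@omega R N M d) /\
  forall m : Zd d, inIk k m ->
    opnorm_le (commutator (@omega R N M d) (pi_delta k sigma m))
              ((l1 m)%:R / M%:R).
Proof.
move=> _ kP [sigma_norm1 _ _ _ _] _ M_ge2 wedge.
have M_gt0 : (0 < M)%N by apply: leq_trans M_ge2.
split; last by move=> m _; exact: opnorm_le_commutator_omega_pi.
apply: (@finite_rank_diag R d (@w R N M d) _ (N + M)) => n.
  by rewrite w_ge0 ?w_le1.
exact: l1_le_of_w_neq0.
Qed.
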